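(* Let $n\ge1$ be a natural number, let $a,b,\alpha,\beta$ be variables (with $\beta a-\alpha b\neq0$), and write $\Psi_r(n)=\Psi\left(\begin{array}{cc|c} a & b & n \\ \alpha & \beta & r \end{array}\right)$, $\Phi_r(n)=\Phi\left(\begin{array}{cc|c} a & b & n \\ \alpha & \beta & r \end{array}\right)$. Let $D=\alpha\frac{\partial}{\partial a}+\beta\frac{\partial}{\partial b}$ (so $\alpha,\beta$ are held constant). Then \[ \Psi_r(n)=-\frac{1}{r}\,D\,\Psi_{r-1}(n)\quad\text{for }1\le r\le\lfloor n/2\rfloor,\qquad \Phi_r(n)=-\frac{1}{r}\,D\,\Phi_{r-1}(n)\quad\text{for }1\le r\le\lfloor (n-1)/2\rfloor. \]
   Context: $\delta(m)=1$ for $m$ odd, $0$ for $m$ even; $\lfloor\cdot\rfloor$ is the floor. For indeterminates $a,b,\alpha,\beta$ and $n\ge1$, $\Psi\left(\begin{array}{cc|c} a & b & n \\ \alpha & \beta & r \end{array}\right)$ ($0\le r\le\lfloor n/2\rfloor$) and $\Phi\left(\begin{array}{cc|c} a & b & n \\ \alpha & \beta & r \end{array}\right)$ ($0\le r\le\lfloor (n-1)/2\rfloor$) are the unique polynomials in $\mathbb{Z}[a,b,\alpha,\beta]$ such that, identically in $x,y$, $(\beta a-\alpha b)^{\lfloor n/2\rfloor}\frac{x^n+y^n}{(x+y)^{\delta(n)}}=\sum_{r}\Psi\left(\begin{array}{cc|c} a & b & n \\ \alpha & \beta & r \end{array}\right)(\alpha x^2+\beta xy+\alpha y^2)^{\lfloor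 n/2\rfloor-r}(ax^2+bxy+ay^2)^r$ and $(\beta a-\alpha b)^{\lfloor (n-1)/2\rfloor}\frac{x^n-y^n}{(x-y)(x+y)^{\delta(n-1)}}=\sum_{r}\Phi\left(\begin{array}{cc|c} a & b & n \\ \alpha & \beta & r \end{array}\right)(\alpha x^2+\beta xy+\alpha y^2)^{\lfloor (n-1)/2\rfloor-r}(ax^2+bxy+ay^2)^r$. *)

From HB Require Import structures.
From mathcomp Require Import all_boot all_order all_algebra.
From mathcomp Require Import mpoly.
Set Implicit Arguments. Unset Strict Implicit. Unset Printing Implicit Defensive.
Import GRing.Theory.
Local Open Scope ring_scope.

Definition ia : 'I_4 := @Ordinal 4 0 isT.
Definition ib : 'I_4 := @Ordinal 4 1 isT.
Definition ialpha : 'I_4 := @Ordinal 4 2 isT.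
Definition ibeta : 'I_4 := @Ordinal 4 3 isT.

Section Vars.
Variable R : comRingType.
Definition pa : {mpoly R[4]} := 'X_ia.
Definition pb : {mpoly R[4]} := 'X_ib.
Definition palpha : {mpoly R[4]} := 'X_ialpha.
Definition pbeta : {mpoly R[4]} := 'X_ibeta.

Definition Dop (p : {mpoly R[4]}) : {mpoly R[4]} :=
  palpha * mderiv ia p + pbeta * mderiv ib p.
End Vars.

Definition ix : 'I_2 := @Ordinal 2 0 isT.
Definition iy : 'I_2 := @Ordinal 2 1 isT.
Notation ZP := {mpoly int[4]}.
Notation XY := {mpoly ZP[2]}.
Definition px : XY := 'X_ix.
Definition py : XY := 'X_iy.

Definition delta (m : nat) : nat := odd m.

Definition Qalpha : XY :=
  (palpha int)%:MP * px ^+ 2 + (pbeta int)%:MP * (px * py) + (palpha int)%:MP * py ^+ 2.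
Definition Qa : XY :=
  (pa int)%:MP * px ^+ 2 + (pb int)%:MP * (px * py) + (pa int)%:MP * py ^+ 2.

Definition det_ab : ZP := pbeta int * pa int - palpha int * pb int.

(* Defining identity of Psi(a b n / alpha beta r), 0 <= r <= n/2, with the
   division by (x+y)^delta(n) cleared. *)
Definition IsPsi (n : nat) (Psi : nat -> ZP) : Prop :=
  (det_ab ^+ (n./2))%:MP * (px ^+ n + py ^+ n) =
  (px + py) ^+ delta n *
    \sum_(r < (n./2).+1) (Psi r)%:MP * Qalpha ^+ (n./2 - r) * Qa ^+ r.

(* Defining identity of Phi(a b n / alpha beta r), 0 <= r <= (n-1)/2, with
   the division by (x-y)(x+y)^delta(n-1) cleared. *)
Definition IsPhi (n : nat) (Phi : nat -> ZP) : Prop :=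
  (det_ab ^+ ((n.-1)./2))%:MP * (px ^+ n - py ^+ n) =
  (px - py) * (px + py) ^+ delta n.-1 *
    \sum_(r < ((n.-1)./2).+1) (Phi r)%:MP * Qalpha ^+ ((n.-1)./2 - r) * Qa ^+ r.

Definition toQ (p : ZP) : {mpoly rat[4]} := map_mpoly (fun z : int => z%:~R) p.

From HB Require Import structures.
From mathcomp Require Import all_boot all_order all_algebra.
From mathcomp Require Import mpoly ring zify.
Set Implicit Arguments. Unset Strict Implicit. Unset Printing Implicit Defensive.
Import GRing.Theory.
Local Open Scope ring_scope.

(* Put y = 1 in the defining identities and apply D coefficientwise.  D kills
   det_ab, x and y, as well as Qalpha, while D Qa = Qalpha; hence
   D (Qalpha^(k-r) Qa^r) = r Qalpha^(k-r+1) Qa^(r-1), and after cancelling the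
   factor (x + y)^delta (resp. (x - y)(x + y)^delta) the identity becomes
   sum_r (D Psi_r + (r+1) Psi_(r+1)) Qalpha^(k-r) Qa^r = 0.  The products
   Qalpha^(k-r) Qa^r are linearly independent: modulo Qa we have
   a Qalpha = det_ab x, and Qa, whose constant term a is nonzero, divides no
   nonzero constant multiple of a power of x. *)

Definition derivation {R : pzRingType} (d : R -> R) :=
  forall x y, d (x * y) = d x * y + x * d y.

Section Derivation.
Variables (R : comNzRingType) (d : {additive R -> R}).
Hypothesis dM : derivation d.

Lemma derivation1 : d 1 = 0.
Proof. by apply: (addrI (d 1)); rewrite addr0 -{3}[1]mulr1 dM mulr1 mul1r. Qed.

Lemma derivationXn x m : d (x ^+ m) = x ^+ m.-1 * d x *+ m.
Proof.
elim: m => [|m IH]; first by rewrite expr0 derivation1 mulr0n.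
rewrite exprS dM IH; case: m {IH} => [|m] /=; first by rewrite !expr0 mulr0n; ring.
by rewrite !exprS; ring.
Qed.

Lemma derivationM_eq0 x y : d x = 0 -> d y = 0 -> d (x * y) = 0.
Proof. by move=> dx dy; rewrite dM dx dy mul0r mulr0 addr0. Qed.

Lemma derivationXn_eq0 x m : d x = 0 -> d (x ^+ m) = 0.
Proof. by move=> dx; rewrite derivationXn dx mulr0 mul0rn. Qed.

Lemma derivation_map_poly : derivation (map_poly d).
Proof.
move=> p q; apply/polyP => i; rewrite coefD !coef_map !coefM raddf_sum -big_split /=.
by apply: eq_bigr => j _; rewrite dM !coef_map.
Qed.

Lemma map_poly_derivationX : map_poly d 'X = 0.
Proof.
apply/polyP => i; rewrite coef_map coefX coef0.
by case: eqP; rewrite ?derivation1 ?raddf0.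
Qed.

End Derivation.

Lemma mderiv_mpolyX n (R : comNzRingType) (i j : 'I_n) :
  mderiv i ('X_j : {mpoly R[n]}) = (i == j)%:R.
Proof.
rewrite mderivX mnm1E eq_sym; case: eqP => [->|_]; last by rewrite scale0r.
suff -> : (U_(j) - U_(j) = 0)%MM by rewrite mpolyX0 scale1r.
by apply/mnmP => l; rewrite mnmBE mnm0E subnn.
Qed.

Lemma map_mpoly_mderiv n (R S : comNzRingType) (f : {rmorphism R -> S}) i
    (p : {mpoly R[n]}) :
  map_mpoly f (mderiv i p) = mderiv i (map_mpoly f p).
Proof.
elim/mpolyind: p => [|c m p _ _ IH]; first by rewrite !raddf0.
rewrite !raddfD /= IH mderivZ mderivX !map_mpolyZ !map_mpolyX mderivZ mderivX.
by rewrite rmorph_nat.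
Qed.

Lemma Dop_is_zmod_morphism (R : comNzRingType) : zmod_morphism (@Dop R).
Proof. by move=> p q; rewrite /Dop !mderivB; ring. Qed.

HB.instance Definition _ (R : comNzRingType) :=
  GRing.isZmodMorphism.Build _ _ (@Dop R) (@Dop_is_zmod_morphism R).

Section DopDerivation.
Variable R : comNzRingType.

Lemma Dop_derivation : derivation (@Dop R).
Proof. by move=> p q; rewrite /Dop !mderivM; ring. Qed.

Lemma Dop_pa : Dop (pa R) = palpha R.
Proof. by rewrite /Dop /pa !mderiv_mpolyX /= mulr1 mulr0 addr0. Qed.

Lemma Dop_pb : Dop (pb R) = pbeta R.
Proof. by rewrite /Dop /pb !mderiv_mpolyX /= mulr1 mulr0 add0r. Qed.

Lemma Dop_palpha : Dop (palpha R) = 0.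
Proof. by rewrite /Dop /palpha !mderiv_mpolyX /= !mulr0 addr0. Qed.

Lemma Dop_pbeta : Dop (pbeta R) = 0.
Proof. by rewrite /Dop /pbeta !mderiv_mpolyX /= !mulr0 addr0. Qed.

Lemma map_mpoly_Dop (S : comNzRingType) (f : {rmorphism R -> S}) p :
  map_mpoly f (Dop p) = Dop (map_mpoly f p).
Proof.
by rewrite /Dop rmorphD !rmorphM /= !map_mpoly_mderiv /palpha /pbeta !map_mpolyX.
Qed.
End DopDerivation.

Lemma Dop_det_ab : Dop det_ab = 0.
Proof.
rewrite /det_ab raddfB /= !Dop_derivation Dop_pa Dop_pb Dop_palpha Dop_pbeta; ring.
Qed.

Section Independence.
Variable A : idomainType.
Implicit Types (u w : A) (p q U V : {poly A}).

Definition symquad u w : {poly A} := u%:P * 'X^2 + w%:P * 'X + u%:P.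

Definition homsum U V k (c : nat -> A) : {poly A} :=
  \sum_(r < k.+1) (c r)%:P * U ^+ (k - r) * V ^+ r.

Lemma homsum0 U V c : homsum U V 0 c = (c 0%N)%:P.
Proof. by rewrite /homsum big_ord1 subnn !expr0 !mulr1. Qed.

Lemma homsumS U V k c :
  homsum U V k.+1 c = (c 0%N)%:P * U ^+ k.+1 + V * homsum U V k (c \o succn).
Proof.
rewrite /homsum big_ord_recl subn0 expr0 mulr1 mulr_sumr; congr (_ + _).
by apply: eq_bigr => i _; rewrite lift0 subSS exprS /=; ring.
Qed.

Lemma coef_symquad0 u w : (symquad u w)`_0 = u.
Proof. by rewrite /symquad !coefE /= !mulr0 !add0r. Qed.

Lemma coef_symquad2 u w : (symquad u w)`_2 = u.
Proof. by rewrite /symquad !coefE /= mulr1 mulr0 !addr0. Qed.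

Lemma symquad_neq0 u w : u != 0 -> symquad u w != 0.
Proof. by apply: contraNneq => uw0; rewrite -(coef_symquad0 u w) uw0 coef0. Qed.

Lemma mul_eq_CXn p q c m :
  p`_0 != 0 -> (1 < size p)%N -> p * q = c%:P * 'X^m -> c = 0.
Proof.
move=> p0 p_gt1; elim: m q => [|m IH] q.
  rewrite expr0 mulr1 => pq; have [q0|q_neq0] := eqVneq q 0.
    by apply/eqP; rewrite -polyC_eq0 -pq q0 mulr0.
  have p_neq0 : p != 0 by rewrite -size_poly_gt0 ltnW.
  have := size_polyC_leq1 c; rewrite -pq size_mul //.
  by move: q_neq0; rewrite -size_poly_gt0; lia.
move=> pq; have q0 : q`_0 = 0.
  have /eqP := congr1 (coefp 0) pq.
  by rewrite /= coef0M coefCM coefXn /= mulr0 mulf_eq0 (negPf p0) => /eqP.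
have {}q0 : q = drop_poly 1 q * 'X.
  rewrite -{1}(poly_take_drop 1 q) expr1 addrC -[RHS]addr0; congr (_ + _).
  by apply/polyP => -[|i]; rewrite coef_take_poly coef0 ?q0.
apply: (IH (drop_poly 1 q)); apply: (@mulIf _ 'X); first by rewrite polyX_eq0.
by rewrite -mulrA -q0 pq exprSr mulrA.
Qed.

Lemma symquad_ndvd a b al be q c m :
  a != 0 -> be * a - al * b != 0 ->
  symquad a b * q = c%:P * symquad al be ^+ m -> c = 0.
Proof.
set V := symquad a b; set U := symquad al be; set D := be * a - al * b.
move=> a0 D0 VqU.
have aU : a%:P * U = D%:P * 'X + al%:P * V.
  by rewrite /U /V /D /symquad polyCB !polyCM; ring.
have V0 : V`_0 != 0 by rewrite coef_symquad0.
have V_gt1 : (1 < size V)%N.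
  by rewrite ltnNge; apply: contra a0 => /leq_sizeP/(_ 2 isT) <-; rewrite coef_symquad2.
pose S := \sum_(i < m) (a%:P * U) ^+ (m.-1 - i) * (D%:P * 'X) ^+ i.
have eXX : (a%:P * U) ^+ m - (D%:P * 'X) ^+ m = al%:P * V * S.
  by rewrite subrXX -/S aU [D%:P * 'X + _]addrC addrK.
have VqX : V * (a%:P ^+ m * q - c%:P * al%:P * S) = (c * D ^+ m)%:P * 'X^m.
  have -> : V * (a%:P ^+ m * q - c%:P * al%:P * S) =
      a%:P ^+ m * (V * q) - c%:P * (al%:P * V * S) by ring.
  by rewrite VqU -eXX polyCM rmorphXn /= !exprMn; ring.
have /eqP := mul_eq_CXn V0 V_gt1 VqX.
by rewrite mulf_eq0 expf_eq0 (negPf D0) andbF orbF => /eqP.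
Qed.

Lemma homsum_eq0_coef U V k c :
  V != 0 -> (forall m e q, V * q = e%:P * U ^+ m -> e = 0) ->
  homsum U V k c = 0 -> forall r, (r <= k)%N -> c r = 0.
Proof.
move=> V0 V_ndvd; elim: k c => [|k IH] c.
  by rewrite homsum0 => /eqP; rewrite polyC_eq0 => /eqP c0 [|r].
rewrite homsumS => hs.
have c0 : c 0%N = 0.
  apply: (V_ndvd k.+1 _ (- homsum U V k (c \o succn))).
  by rewrite mulrN; apply/esym/eqP; rewrite -addr_eq0 hs.
move: hs; rewrite c0 mul0r add0r => /eqP; rewrite mulf_eq0 (negPf V0) /=.
by move=> /eqP/IH hk [|r] // /hk.
Qed.

End Independence.

Section DerivationOnHomsum.
Variables (A : idomainType) (d : {additive A -> A}).
Hypothesis dM : derivation d.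
Local Notation Dp := (map_poly d).

Lemma derivation_symquad u w : Dp (symquad u w) = symquad (d u) (d w).
Proof.
have DpM := derivation_map_poly dM; have DpX := map_poly_derivationX dM.
rewrite /symquad !raddfD /= !DpM !map_polyC DpX; ring.
Qed.

Lemma derivation_homsum U V k c : Dp U = 0 -> Dp V = U ->
  Dp (homsum U V k c) =
  homsum U V k (fun r => d (c r) + (if (r < k)%N then r.+1%:R * c r.+1 else 0)).
Proof.
move=> DU DV; have DpM := derivation_map_poly dM.
rewrite /homsum raddf_sum /=.
under eq_bigr => r _ do
  rewrite !DpM map_polyC !(derivationXn DpM) /= DU DV !mulr0 mul0rn mulr0 addr0.
under [in RHS]eq_bigr => r _ do rewrite polyCD !mulrDl.
rewrite !big_split /=; congr (_ + _).
rewrite big_ord_recl big_ord_recr /= mulr0n mulr0 add0r ltnn polyC0 !mul0r addr0.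
apply: eq_bigr => i _; rewrite /bump leq0n add1n add0n ltn_ord.
by rewrite -(subnSK (ltn_ord i)) exprS polyCM rmorph_nat /=; ring.
Qed.

Variables a b al be : A.
Hypotheses (da : d a = al) (db : d b = be) (dal : d al = 0) (dbe : d be = 0).
Hypotheses (a_neq0 : a != 0) (det_neq0 : be * a - al * b != 0).

Lemma derivation_homsum_coef k c E :
  E != 0 -> Dp E = 0 -> Dp (E * homsum (symquad al be) (symquad a b) k c) = 0 ->
  forall r, (r < k)%N -> r.+1%:R * c r.+1 = - d (c r).
Proof.
move=> E0 DE DEs r rk.
have DU : Dp (symquad al be) = 0.
  by rewrite derivation_symquad dal dbe /symquad polyC0 !mul0r !addr0.
have DV : Dp (symquad a b) = symquad al be by rewrite derivation_symquad da db.
have Ds : Dp (homsum (symquad al be) (symquad a b) k c) = 0.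
  apply/eqP; move: DEs; rewrite (derivation_map_poly dM) DE mul0r add0r.
  by move/eqP; rewrite mulf_eq0 (negPf E0).
rewrite derivation_homsum // in Ds.
have := homsum_eq0_coef (symquad_neq0 b a_neq0)
  (fun _ _ _ => symquad_ndvd a_neq0 det_neq0) Ds (ltnW rk).
by rewrite rk addrC => /eqP; rewrite addr_eq0 => /eqP.
Qed.
End DerivationOnHomsum.

Definition dehomog : XY -> {poly ZP} :=
  mmap (@polyC ZP) (fun i : 'I_2 => if i == ix then 'X else 1).

HB.instance Definition _ := GRing.RMorphism.on dehomog.

Lemma dehomogC c : dehomog c%:MP = c%:P.
Proof. exact: mmapC. Qed.

Lemma dehomog_px : dehomog px = 'X.
Proof. by rewrite /dehomog /px mmapX mmap1U. Qed.

Lemma dehomog_py : dehomog py = 1.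
Proof. by rewrite /dehomog /py mmapX mmap1U. Qed.

Lemma dehomog_symform (u w : ZP) (X Y : XY) : dehomog X = 'X -> dehomog Y = 1 ->
  dehomog (u%:MP * X ^+ 2 + w%:MP * (X * Y) + u%:MP * Y ^+ 2) = symquad u w.
Proof. by move=> hX hY; rewrite !rmorphD !rmorphM /= hX hY !dehomogC !mulr1 -expr2. Qed.

Lemma dehomog_Qalpha : dehomog Qalpha = symquad (palpha int) (pbeta int).
Proof. exact: dehomog_symform dehomog_px dehomog_py. Qed.

Lemma dehomog_Qa : dehomog Qa = symquad (pa int) (pb int).
Proof. exact: dehomog_symform dehomog_px dehomog_py. Qed.

Lemma dehomog_homsum (Q1 Q2 : XY) k (c : nat -> ZP) :
  dehomog (\sum_(r < k.+1) (c r)%:MP * Q1 ^+ (k - r) * Q2 ^+ r) =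
  homsum (dehomog Q1) (dehomog Q2) k c.
Proof.
by rewrite rmorph_sum; apply: eq_bigr => r _; rewrite !rmorphM !rmorphXn /= dehomogC.
Qed.

Lemma pa_neq0 : pa int != 0.
Proof.
apply/negP => /eqP /(congr1 (meval (fun=> 1 : int))).
by rewrite /pa mevalXU meval0.
Qed.

Lemma det_ab_neq0 : det_ab != 0.
Proof.
pose v (i : 'I_4) : int := ((i == ia) || (i == ibeta))%:R.
apply/negP => /eqP /(congr1 (meval v)).
by rewrite /det_ab mevalB !mevalM /pa /pb /palpha /pbeta !mevalXU meval0.
Qed.

Section DehomogenizedIdentities.
Local Notation D := (map_poly (@Dop int)).

Let DM : derivation D := derivation_map_poly (@Dop_derivation int).

Lemma D_XnD m (p : {poly ZP}) : D p = 0 -> D ('X ^+ m + p) = 0.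
Proof.
move=> Dp0; rewrite raddfD /= (derivationXn_eq0 DM) ?Dp0 ?addr0 //.
exact: map_poly_derivationX (@Dop_derivation int).
Qed.

Lemma D1 : D 1 = 0.
Proof. exact: derivation1 DM. Qed.

Lemma DN1 : D (-1) = 0.
Proof. by rewrite raddfN /= D1 oppr0. Qed.

Lemma D_polyC c : Dop c = 0 -> D c%:P = 0.
Proof. by move=> dc; rewrite map_polyC /= dc polyC0. Qed.

Lemma Dop_homsum_coef k c L E :
  L = E * homsum (symquad (palpha int) (pbeta int)) (symquad (pa int) (pb int)) k c ->
  D L = 0 -> E != 0 -> D E = 0 ->
  forall r, (r < k)%N -> r.+1%:R * c r.+1 = - Dop (c r).
Proof.
move=> -> DL E0 DE.
exact: (derivation_homsum_coef (@Dop_derivation int) (Dop_pa _) (Dop_pb _)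
          (Dop_palpha _) (Dop_pbeta _) pa_neq0 det_ab_neq0 E0 DE DL).
Qed.

Lemma IsPsi_coef_rec n Psi : IsPsi n Psi ->
  forall r, (r < n./2)%N -> r.+1%:R * Psi r.+1 = - Dop (Psi r).
Proof.
have := derivationXn_eq0 (@Dop_derivation int) n./2 Dop_det_ab.
(* Abstracting the concrete polynomials keeps the rewrites below from unfolding them. *)
move: dehomog_px dehomog_py dehomog_Qalpha dehomog_Qa; rewrite /IsPsi.
move: (px) (py) (Qalpha) (Qa) (det_ab ^+ n./2) => X Y Q1 Q2 C dX dY dQ1 dQ2 dC.
move=> /(congr1 dehomog); rewrite !(rmorphM, rmorphXn, rmorphD) /= dehomogC.
rewrite dehomog_homsum dX dY dQ1 dQ2 expr1n => eq_dh.
apply: (Dop_homsum_coef eq_dh).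
- by apply: (derivationM_eq0 DM); [exact: D_polyC | exact: D_XnD D1].
- by rewrite expf_neq0 // -polyC1 monic_neq0 ?monicXaddC.
- by apply: (derivationXn_eq0 DM); exact: (D_XnD 1 D1).
Qed.

Lemma IsPhi_coef_rec n Phi : IsPhi n Phi ->
  forall r, (r < n.-1./2)%N -> r.+1%:R * Phi r.+1 = - Dop (Phi r).
Proof.
have := derivationXn_eq0 (@Dop_derivation int) n.-1./2 Dop_det_ab.
move: dehomog_px dehomog_py dehomog_Qalpha dehomog_Qa; rewrite /IsPhi.
move: (px) (py) (Qalpha) (Qa) (det_ab ^+ n.-1./2) => X Y Q1 Q2 C dX dY dQ1 dQ2 dC.
move=> /(congr1 dehomog); rewrite !(rmorphM, rmorphXn, rmorphB, rmorphD) /= dehomogC.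
rewrite dehomog_homsum dX dY dQ1 dQ2 expr1n => eq_dh.
apply: (Dop_homsum_coef eq_dh).
- by apply: (derivationM_eq0 DM); [exact: D_polyC | exact: D_XnD DN1].
- rewrite mulf_neq0 ?expf_neq0 // -polyC1 monic_neq0 ?monicXaddC ?monicXsubC //.
- apply: (derivationM_eq0 DM); first exact: (D_XnD 1 DN1).
  by apply: (derivationXn_eq0 DM); exact: (D_XnD 1 D1).
Qed.
End DehomogenizedIdentities.

Lemma toQ_coef_rec (c : nat -> ZP) r :
  r.+1%:R * c r.+1 = - Dop (c r) ->
  toQ (c r.+1) = - (r.+1%:R : rat)^-1 *: Dop (toQ (c r)).
Proof.
move=> /(congr1 toQ); rewrite /toQ rmorphM rmorph_nat raddfN /= map_mpoly_Dop => h.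
rewrite -[Dop _]opprK -h scaleNr scalerN opprK mulr_natl -scaler_nat scalerA.
by rewrite mulVf ?scale1r // Num.Theory.pnatr_eq0.
Qed.

Theorem theorem8p1 (n : nat) : (1 <= n)%N ->
  (forall Psi : nat -> {mpoly int[4]}, IsPsi n Psi ->
     forall r : nat, (1 <= r <= n./2)%N ->
       toQ (Psi r) = - (r%:R : rat)^-1 *: Dop (toQ (Psi r.-1))) /\
  (forall Phi : nat -> {mpoly int[4]}, IsPhi n Phi ->
     forall r : nat, (1 <= r <= (n.-1)./2)%N ->
       toQ (Phi r) = - (r%:R : rat)^-1 *: Dop (toQ (Phi r.-1))).
Proof.
move=> _; split=> [Psi /IsPsi_coef_rec rec | Phi /IsPhi_coef_rec rec] [|r] //= rk;
  exact/toQ_coef_rec/rec.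
Qed.
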